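(* Let $n$ be a positive integer. Then in the ring $\mathbb{Z}[x,q]$ (polynomials in $x$ whose coefficients are polynomials in $q$; congruences are modulo the indicated polynomials in $q$, coefficientwise in $x$), the following hold: $$(1+q)^2\sum_{k=0}^{n-1}q^{2k}[k+1]_{q^2}\,g_k(x;q^2)\equiv \sum_{k=0}^{n-1}q^{2k}g_k(x;q^2)\pmod{\prod_{\substack{d\mid n\\ d>1\text{ odd}}}\Phi_d(q)},$$ $$\sum_{k=0}^{n-1}q^{k}g_k(x;q)\equiv 0\pmod{\prod_{\substack{d\mid n\\ d\text{ even}}}\Phi_d(q)},$$ $$\sum_{j=0}^{n-1}x^j[j+1]_{q^2}{2j\brack j}_q\sum_{k=j}^{n-1}q^k{k\brack j}_q{k+1\brack j+1}_q\equiv 0\pmod{\prod_{\substack{d\mid n\\ d>2\text{ even}}}\Phi_d(q)}.$$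
   Context: The $q$-binomial coefficients are ${n\brack k}_q=\prod_{i=1}^{k}\frac{1-q^{n-k+i}}{1-q^i}$ for $0\le k\le n$ and $0$ otherwise. The $q$-integer is $[n]_q=\frac{1-q^n}{1-q}$. $\Phi_d(q)$ denotes the $d$-th cyclotomic polynomial. The $q$-Sun polynomials are $g_n(x;q)=\sum_{k=0}^{n}{n\brack k}_q^2{2k\brack k}_q x^k$. An empty product of cyclotomic polynomials equals $1$. *)

(* Z[x,q] is modelled as {poly {poly int}}: outer variable x,
   coefficients in Z[q] = {poly int} with q = 'X. *)
From HB Require Import structures.
From mathcomp Require Import all_boot all_order all_algebra all_field.
Set Implicit Arguments. Unset Strict Implicit. Unset Printing Implicit Defensive.
Import GRing.Theory.
Local Open Scope ring_scope.

Fixpoint qbinom (R : comNzRingType) (q : R) (n k : nat) {struct n} : R :=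
  match n, k with
  | _, 0%N => 1
  | 0%N, _.+1 => 0
  | n'.+1, k'.+1 => qbinom q n' k' + q ^+ k'.+1 * qbinom q n' k'.+1
  end.

Definition qint (R : comNzRingType) (q : R) (n : nat) : R :=
  \sum_(i < n) q ^+ i.

(* The q-Sun polynomial g_n(x;q) = sum_k [n,k]_q^2 [2k,k]_q x^k, with q an
   element of Z[q] (e.g. 'X or 'X^2). *)
Definition gSun (q : {poly int}) (n : nat) : {poly {poly int}} :=
  \sum_(k < n.+1) ((qbinom q n k) ^+ 2 * qbinom q k.*2 k)%:P * 'X ^+ k.

Definition pcongr (M : {poly int}) (P Q : {poly {poly int}}) : Prop :=
  forall i : nat, exists r : {poly int}, P`_i - Q`_i = r * M.

(* Each x-coefficient of the three differences is an integer polynomial D(q),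
   and the moduli are products of distinct monic cyclotomic polynomials, so it
   suffices that D vanishes at every primitive d-th root of unity z for the
   relevant divisors d of n.  At such z the q-Lucas theorem
   [a d + b, c d + e]_z = C(a, c) [b, e]_z cuts the sum over k < n into n/d
   blocks, each a binomial coefficient times one sum over a full period b < d.
   Writing [b, j]_w (w; w)_j = w^(b j) c_j P_j(w^-b) with deg P_j = j turns every
   period sum into a discrete Fourier coefficient d p_k of a polynomial p of
   low degree, which vanishes for degree reasons.  The only surviving case,
   d = 2j + 1 in the first congruence, is computed explicitly and closes by
   the identity (1 + z)^2 (1 + 2 z^2 + 2 z^4 + ... + 2 z^(2j)) = 1 - z^2. *)

From HB Require Import structures.
From mathcomp Require Import all_boot all_order all_algebra all_field.
From mathcomp Require Import zify ring.
Set Implicit Arguments. Unset Strict Implicit. Unset Printing Implicit Defensive.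
Import GRing.Theory.
Local Open Scope ring_scope.

Section QBinomial.

Variables (R : comNzRingType) (q : R).

Lemma qbinomn0 n : qbinom q n 0 = 1.
Proof. by case: n. Qed.

Lemma qbinomSS n k :
  qbinom q n.+1 k.+1 = qbinom q n k + q ^+ k.+1 * qbinom q n k.+1.
Proof. by []. Qed.

Lemma qbinom_small n k : (n < k)%N -> qbinom q n k = 0.
Proof.
elim: n k => [|n IHn] [|k] //= ltnk.
by rewrite !IHn ?mulr0 ?addr0 //; lia.
Qed.

Lemma qbinomnn n : qbinom q n n = 1.
Proof. by elim: n => //= n ->; rewrite qbinom_small ?mulr0 ?addr0. Qed.

Definition qpoch j := \prod_(i < j) (1 - q ^+ i.+1).

Lemma qbinom_qpoch b j :
  qbinom q b j * qpoch j = \prod_(i < j) (1 - q ^+ (b - i)).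
Proof.
rewrite /qpoch; elim: b j => [|b IHb] [|j].
- by rewrite !big_ord0 mulr1.
- by rewrite /= mul0r big_ord_recl /= subn0 expr0 subrr mul0r.
- by rewrite !big_ord0 mulr1.
have IHj := IHb j; have IHj1 := IHb j.+1; rewrite !big_ord_recr /= in IHj1.
rewrite qbinomSS big_ord_recr big_ord_recl /= subn0.
under [X in _ = _ * X]eq_bigr => i _ do rewrite /bump /= add1n subSS.
set A := qbinom q b j in IHj *; set B := qbinom q b j.+1 in IHj1 *.
set P := \prod_(i < j) (1 - q ^+ i.+1) in IHj IHj1 *.
set F := \prod_(i < j) (1 - q ^+ (b - i)) in IHj IHj1 *.
transitivity (A * P * (1 - q ^+ j.+1) + q ^+ j.+1 * (B * (P * (1 - q ^+ j.+1))));
  first by ring.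
rewrite IHj IHj1; case: (leqP j b) => [lejb | ltbj].
  have -> : q ^+ b.+1 = q ^+ j.+1 * q ^+ (b - j) by rewrite -exprD; congr (_ ^+ _); lia.
  by ring.
have -> : F = 0 by rewrite /F (bigD1 (Ordinal ltbj)) //= subnn expr0 subrr mul0r.
by rewrite !mul0r mulr0 !add0r mulr0.
Qed.

End QBinomial.

Lemma rmorph_qbinom (R S : comNzRingType) (f : {rmorphism R -> S}) q n k :
  f (qbinom q n k) = qbinom (f q) n k.
Proof.
elim: n k => [|n IHn] [|k] //=; rewrite ?rmorph1 ?rmorph0 //.
by rewrite rmorphD rmorphM rmorphXn !IHn.
Qed.

Lemma rmorph_qint (R S : comNzRingType) (f : {rmorphism R -> S}) q n :
  f (qint q n) = qint (f q) n.
Proof. by rewrite /qint rmorph_sum; apply: eq_bigr => i _; rewrite rmorphXn. Qed.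

Lemma sum_qint_subr1 (R : comNzRingType) (w : R) N (f : nat -> R) :
  (w - 1) * \sum_(b < N) w ^+ b * qint w b.+1 * f b =
  w * \sum_(b < N) (w ^+ b) ^+ 2 * f b - \sum_(b < N) w ^+ b * f b.
Proof.
rewrite !mulr_sumr -sumrB; apply: eq_bigr => b _.
transitivity (w ^+ b * ((w - 1) * qint w b.+1) * f b); first by ring.
by rewrite /qint -subrX1 exprS; ring.
Qed.

Section CyclotomicDivisibility.

Local Notation pZtoC := (map_poly (intr : int -> algC)).

Lemma root_Cyclotomic d x : (0 < d)%N -> root (pZtoC 'Phi_d) x = d.-primitive_root x.
Proof.
move=> d_gt0; have [z prim_z] := C_prim_root_exists d_gt0.
by rewrite (Cintr_Cyclotomic prim_z) (root_cyclotomic prim_z).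
Qed.

Lemma prim_root_order_inj d d' (x : algC) :
  d.-primitive_root x -> d'.-primitive_root x -> d = d'.
Proof.
move=> prim_d prim_d'; apply/eqP; rewrite eqn_dvd.
by rewrite (prim_order_dvd prim_d) (prim_expr_order prim_d')
           (prim_order_dvd prim_d') (prim_expr_order prim_d) !eqxx.
Qed.

Lemma Cyclotomic_dvdp d (D : {poly algC}) : (0 < d)%N ->
  (forall z, d.-primitive_root z -> root D z) -> pZtoC 'Phi_d %| D.
Proof.
move=> d_gt0 rootD; have [z prim_z] := C_prim_root_exists d_gt0.
rewrite (Cintr_Cyclotomic prim_z) /cyclotomic.
pose s := [seq z ^+ k | k : 'I_d <- enum (fun k : 'I_d => coprime k d)].
have -> : \prod_(k < d | coprime k d) ('X - (z ^+ k)%:P) = \prod_(y <- s) ('X - y%:P).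
  by rewrite big_map big_filter.
apply: uniq_roots_dvdp.
  apply/allP => y /mapP [k]; rewrite mem_enum => co_k ->.
  by apply: rootD; rewrite prim_root_exp_coprime.
rewrite uniq_rootsE map_inj_in_uniq ?enum_uniq // => i j _ _.
move/eqP; rewrite (eq_prim_root_expr prim_z) !modn_small ?ltn_ord //.
by move/eqP/val_inj.
Qed.

Lemma prod_Cyclotomic_dvdp (ds : seq nat) (D : {poly algC}) :
  uniq ds -> {in ds, forall d, 0 < d}%N ->
  {in ds, forall d z, d.-primitive_root z -> root D z} ->
  \prod_(d <- ds) pZtoC 'Phi_d %| D.
Proof.
elim: ds => [|d ds IHds] /=; first by rewrite big_nil dvd1p.
move=> /andP [d_notin uniq_ds] ds_gt0 rootD; rewrite big_cons Gauss_dvdp.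
  rewrite (Cyclotomic_dvdp (ds_gt0 _ (mem_head _ _)) (rootD _ (mem_head _ _))).
  by apply: IHds => // d' ds_d'; [apply: ds_gt0 | apply: rootD];
    rewrite inE ds_d' orbT.
apply: Pdiv.ClosedField.root_coprimep => x.
rewrite root_Cyclotomic ?ds_gt0 ?mem_head // => prim_x.
rewrite horner_prod prodf_seq_neq0; apply/allP => d' ds_d'; apply/implyP => _.
rewrite -rootE root_Cyclotomic ?ds_gt0 ?inE ?ds_d' ?orbT //.
by apply: contra d_notin => /(prim_root_order_inj prim_x) ->.
Qed.

Lemma dvdp_intr_monic (D M : {poly int}) :
  M \is monic -> pZtoC M %| pZtoC D -> exists r, D = r * M.
Proof.
move=> monM; have ZtoC_ratr : (intr : int -> algC) =1 ratr \o intr.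
  by move=> a; rewrite /= rmorph_int.
rewrite !(eq_map_poly ZtoC_ratr) !map_poly_comp dvdp_map dvdp_rat_int.
exact: Pdiv.IdomainMonic.dvdpP.
Qed.

End CyclotomicDivisibility.

Definition evalC (z : algC) : {rmorphism {poly int} -> algC} :=
  horner_morph (fun a : int => mulrC z a%:~R).

Lemma evalCX z : evalC z 'X = z.
Proof. exact: horner_morphX. Qed.

Lemma prod_Cyclotomic_dvd_int (P : pred nat) n (D : {poly int}) : (0 < n)%N ->
  (forall d z, (d %| n)%N -> P d -> d.-primitive_root z -> evalC z D = 0) ->
  exists r, D = r * \prod_(d <- divisors n | P d) 'Phi_d.
Proof.
move=> n_gt0 rootD; apply: dvdp_intr_monic.
  by apply: monic_prod => d _; apply: Cyclotomic_monic.
rewrite rmorph_prod -big_filter; apply: prod_Cyclotomic_dvdp.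
- by rewrite filter_uniq // divisors_uniq.
- by move=> d; rewrite mem_filter -dvdn_divisors // => /andP [_ /dvdn_gt0]; apply.
- move=> d; rewrite mem_filter -dvdn_divisors // => /andP [Pd dvd_dn] z prim_z.
  exact/rootP/(rootD d z).
Qed.

Lemma sum_ord_mul (V : nmodType) N d (F : nat -> V) :
  \sum_(k < N * d) F k = \sum_(a < N) \sum_(b < d) F (a * d + b)%N.
Proof.
elim: N => [|N IHN]; first by rewrite mul0n !big_ord0.
by rewrite mulSnr big_split_ord /= IHN big_ord_recr.
Qed.

Lemma sum_ord_blocks (R : pzSemiRingType) N d (g h c : nat -> R) :
  (forall a b, (b < d)%N -> g (a * d + b)%N = c a * h b) ->
  \sum_(k < N * d) g k = (\sum_(a < N) c a) * \sum_(b < d) h b.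
Proof.
move=> gE; rewrite sum_ord_mul mulr_suml; apply: eq_bigr => a _.
by rewrite mulr_sumr; apply: eq_bigr => b _; rewrite gE.
Qed.

Lemma dvdnS_mod d m : (0 < d)%N -> (d %| m.+1)%N = ((m %% d).+1 == d).
Proof.
move=> d_gt0; apply/idP/idP => [dvd_dm1 | /eqP mod_m].
  have dvd_mod : (d %| (m %% d).+1)%N by rewrite /dvdn -addn1 modnDml addn1.
  have := dvdn_leq (ltn0Sn _) dvd_mod; have := ltn_pmod m d_gt0.
  by move=> *; apply/eqP; lia.
by rewrite /dvdn -addn1 -modnDml addn1 mod_m modnn.
Qed.

Section PrimitiveRoot.

Variables (d : nat) (z : algC).
Hypothesis prim_z : d.-primitive_root z.

Let d_gt0 : (0 < d)%N := prim_order_gt0 prim_z.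

Lemma prim_root_neq0 : z != 0.
Proof. by rewrite (prim_root_eq0 prim_z) -lt0n. Qed.

Lemma prim_rootV : d.-primitive_root z^-1.
Proof.
have -> : z^-1 = z ^+ d.-1.
  apply: (mulfI prim_root_neq0); rewrite mulfV ?prim_root_neq0 // -exprS prednK //.
  by rewrite (prim_expr_order prim_z).
by rewrite prim_root_exp_coprime //; case: d d_gt0 => // d' _; rewrite coprimenS.
Qed.

Lemma prim_rootXMD a b : z ^+ (a * d + b) = z ^+ b.
Proof. by rewrite exprD mulnC exprM (prim_expr_order prim_z) expr1n mul1r. Qed.

Lemma prim_rootX_neq1 k : (0 < k < d)%N -> z ^+ k != 1.
Proof.
move=> /andP [k_gt0 ltkd]; rewrite -(prim_order_dvd prim_z).
by apply/negP => /dvdn_leq; lia.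
Qed.

Lemma sum_prim_rootX e :
  \sum_(b < d) (z ^+ b) ^+ e = if (d %| e)%N then d%:R else 0.
Proof.
under eq_bigr do rewrite exprAC.
case: ifPn => [| ndvd_de].
  rewrite (prim_order_dvd prim_z) => /eqP ->.
  by under eq_bigr do rewrite expr1n; rewrite sumr_const card_ord.
have ze_neq1 : z ^+ e - 1 != 0 by rewrite subr_eq0 -(prim_order_dvd prim_z).
have := subrX1 (z ^+ e) d; rewrite exprAC (prim_expr_order prim_z) expr1n subrr.
by move/esym/eqP; rewrite mulf_eq0 (negPf ze_neq1) => /eqP.
Qed.

Lemma sum_horner_prim_rootX (Q : {poly algC}) : (size Q <= d + d)%N ->
  \sum_(b < d) Q.[z ^+ b] = d%:R * (Q`_0 + Q`_d).
Proof.
move=> sizeQ; under eq_bigr do rewrite (horner_coef_wide _ sizeQ).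
rewrite exchange_big /=.
under eq_bigr do rewrite -mulr_sumr sum_prim_rootX.
case: d prim_z sizeQ d_gt0 => // d' _ _ _.
rewrite big_split_ord /= !big_ord_recl /= addn0 dvdnn !big1 ?mulr0 ?addr0.
- by ring.
- move=> i _; rewrite /bump /= add1n dvdn_addr // ifN ?mulr0 //.
  by apply/negP => /dvdn_leq; have := ltn_ord i; lia.
- move=> i _; rewrite /bump /= add1n ifN ?mulr0 //.
  by apply/negP => /dvdn_leq; have := ltn_ord i; lia.
Qed.

Lemma qpoch_prim_root_neq0 j : (j < d)%N -> qpoch z j != 0.
Proof.
move=> ltjd; apply/prodf_neq0 => i _; rewrite subr_eq0 eq_sym prim_rootX_neq1 //.
by have := ltn_ord i; lia.
Qed.

Lemma qbinom_prim_root_eq0 e : (0 < e < d)%N -> qbinom z d e = 0.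
Proof.
move=> /andP [e_gt0 ltde]; have := qbinom_qpoch z d e.
rewrite (bigD1 (Ordinal e_gt0)) //= subn0 (prim_expr_order prim_z) subrr mul0r.
move/eqP; rewrite mulf_eq0 (negPf (qpoch_prim_root_neq0 ltde)) orbF.
by move/eqP.
Qed.

Lemma qbinom_lucas n k :
  qbinom z n k = 'C(n %/ d, k %/ d)%:R * qbinom z (n %% d) (k %% d).
Proof.
elim: n k => [|n IHn] [|k]; rewrite ?div0n ?mod0n ?bin0 ?qbinomn0 ?mulr1 //.
  rewrite qbinom_small //; case E: (k.+1 %/ d)%N => [|c]; last by rewrite bin0n mul0r.
  rewrite qbinom_small ?mulr0 //; have := divn_eq k.+1 d; rewrite E; lia.
rewrite qbinomSS !IHn -(prim_expr_mod prim_z k.+1).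
rewrite (modnS n) (divnS n d_gt0) (modnS k) (divnS k d_gt0) !(dvdnS_mod _ d_gt0).
have := ltn_pmod n d_gt0; have := ltn_pmod k d_gt0.
set a := (n %/ d)%N; set b := (n %% d)%N; set c := (k %/ d)%N; set e := (k %% d)%N.
move=> lted ltbd; case: (eqVneq b.+1 d) => [bd | bd]; case: (eqVneq e.+1 d) => ed /=.
- rewrite add1n binS natrD expr0 mul1r qbinomn0 !mulr1.
  have -> : b = e by lia.
  by rewrite qbinomnn mulr1 addrC.
- rewrite !add0n mulr0.
  transitivity ('C(a, c)%:R * qbinom z b.+1 e.+1); first by rewrite qbinomSS; ring.
  by rewrite bd qbinom_prim_root_eq0 ?mulr0 //; lia.
- rewrite qbinom_small; last by lia.
  by rewrite mulr0 add0r expr0 mul1r qbinomn0 add0n mulr1.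
- by rewrite !add0n; ring.
Qed.

Lemma qbinom_lucasMD a b c e : (b < d)%N -> (e < d)%N ->
  qbinom z (a * d + b) (c * d + e) = 'C(a, c)%:R * qbinom z b e.
Proof.
move=> ltbd lted.
by rewrite qbinom_lucas !divnMDl // !modnMDl !modn_small // !divn_small // !addn0.
Qed.

Lemma qbinom_lucasMDS a b c e : (b < d)%N -> (e.+1 < d)%N ->
  qbinom z (a * d + b).+1 (c * d + e).+1 = 'C(a, c)%:R * qbinom z b.+1 e.+1.
Proof.
move=> ltbd lte1d; rewrite -!addnS.
have [ltb1d | leb1d] := ltnP b.+1 d; first by rewrite qbinom_lucasMD.
have b1E : b.+1 = d by lia.
rewrite (_ : a * d + b.+1 = a.+1 * d + 0)%N; last by rewrite b1E mulSn addnC addn0.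
rewrite qbinom_lucasMD // [qbinom z 0 _]qbinom_small // mulr0 b1E.
by rewrite qbinom_prim_root_eq0 ?mulr0 //; lia.
Qed.

Lemma qint_prim_rootMD a c : (1 < d)%N -> qint z (a * d + c) = qint z c.
Proof.
move=> d_gt1; have z_neq1 : z - 1 != 0.
  by rewrite subr_eq0 -[z in z == _]expr1 prim_rootX_neq1 //; lia.
by apply: (mulfI z_neq1); rewrite /qint -!subrX1 prim_rootXMD.
Qed.

Lemma qbinom_double_eq0 i : (d <= (i %% d).*2)%N -> qbinom z i.*2 i = 0.
Proof.
move=> le_d_2i; have lt_id := ltn_pmod i d_gt0.
have lt_mod : (i.*2 %% d < i %% d)%N.
  have -> : i.*2 = ((i %/ d).*2.+1 * d + ((i %% d).*2 - d))%N.
    by have := divn_eq i d; nia.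
  by rewrite modnMDl modn_small; lia.
by rewrite qbinom_lucas (qbinom_small _ lt_mod) mulr0.
Qed.

End PrimitiveRoot.

Section QPochPoly.

Variables (F : fieldType) (w : F).

Definition qpoch_scale j := \prod_(i < j) (- w^-1 ^+ i).

Definition qpoch_poly c j : {poly F} := \prod_(i < j) (1 - (w ^+ i * c) *: 'X).

Lemma horner_qpoch_poly c j u :
  (qpoch_poly c j).[u] = \prod_(i < j) (1 - w ^+ i * c * u).
Proof.
rewrite /qpoch_poly horner_prod; apply: eq_bigr => i _.
by rewrite hornerD hornerN hornerC hornerZ hornerX.
Qed.

Lemma size_qpoch_poly c j : (size (qpoch_poly c j) <= j.+1)%N.
Proof.
elim: j => [|j IHj]; first by rewrite /qpoch_poly big_ord0 size_poly1.
rewrite /qpoch_poly big_ord_recr /= -/(qpoch_poly c j).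
apply: leq_trans (size_polyMleq _ _) _.
have : (size ((1 - (w ^+ j * c) *: 'X)%R : {poly F}) <= 2)%N.
  apply: leq_trans (size_polyD _ _) _; rewrite size_polyN size_poly1 geq_max /=.
  by apply: leq_trans (size_scale_leq _ _) _; rewrite size_polyX.
by move: IHj; lia.
Qed.

Lemma coef_qpoch_poly01 c j :
  (qpoch_poly c j)`_0 = 1 /\ (qpoch_poly c j)`_1 = - \sum_(i < j) w ^+ i * c.
Proof.
elim: j => [|j [IH0 IH1]]; first by rewrite /qpoch_poly big_ord0 !coef1 big_ord0 oppr0.
rewrite /qpoch_poly big_ord_recr /= -/(qpoch_poly c j); split.
  by rewrite coef0M IH0 coefB coef1 coefZ coefX /= mulr0 subr0 mulr1.
rewrite mulrBr mulr1 coefB -scalerAr coefZ coefMX /= IH1 IH0 big_ord_recr /=.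
by ring.
Qed.

(* Each factor is rewritten as 1 - w^(m-i) = - w^-i * w^m * (1 - w^i * w^-m). *)
Lemma qbinom_qpoch_poly m j : w != 0 ->
  qbinom w m j * qpoch w j = (w ^+ m) ^+ j * qpoch_scale j * (qpoch_poly 1 j).[w^-1 ^+ m].
Proof.
move=> w_neq0; rewrite qbinom_qpoch horner_qpoch_poly /qpoch_scale.
case: (leqP j m) => [lejm | ltmj].
  have -> : (w ^+ m) ^+ j = \prod_(i < j) w ^+ m by rewrite prodr_const card_ord.
  rewrite -!big_split /=.
  apply: eq_bigr => i _; have ltim : (i < m)%N by apply: leq_trans (ltn_ord i) lejm.
  rewrite (expfB _ ltim) !exprVn mulr1.
  have wm_neq0 : w ^+ m != 0 by rewrite expf_neq0.
  have wi_neq0 : w ^+ i != 0 by rewrite expf_neq0.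
  by field; rewrite wm_neq0 wi_neq0.
rewrite (bigD1 (Ordinal ltmj)) //= subnn expr0 subrr mul0r.
rewrite [X in _ = _ * X](bigD1 (Ordinal ltmj)) //= exprVn mulr1 mulfV ?expf_neq0 //.
by rewrite subrr mul0r mulr0.
Qed.

End QPochPoly.

Section PeriodSums.

Variables (d : nat) (w : algC).
Hypothesis prim_w : d.-primitive_root w.

Let d_gt0 : (0 < d)%N := prim_order_gt0 prim_w.
Let w_neq0 : w != 0 := prim_root_neq0 prim_w.

Lemma prim_rootX_exp_subn b k : (k <= d)%N -> (w ^+ b) ^+ k = (w^-1 ^+ b) ^+ (d - k).
Proof.
move=> lekd; rewrite !exprVn; set y := w ^+ b.
have y_neq0 : y ^+ (d - k) != 0 by rewrite !expf_neq0.
apply: (mulIf y_neq0); rewrite mulVf // -exprD subnKC //.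
by rewrite /y exprAC (prim_expr_order prim_w) expr1n.
Qed.

(* A discrete Fourier coefficient of p: writing (w^b)^k = (w^-b)^(d-k), the sum
   averages X^(d-k) p over the d-th roots of unity w^-b. *)
Lemma sum_prim_rootX_hornerV k (p : {poly algC}) : (k <= d)%N -> (size p <= d + k)%N ->
  \sum_(b < d) (w ^+ b) ^+ k * p.[w^-1 ^+ b] =
  d%:R * ((if (k < d)%N then 0 else p`_0) + p`_k).
Proof.
move=> lekd size_p.
under eq_bigr => b _ do rewrite (prim_rootX_exp_subn b lekd) -hornerXn -hornerM.
rewrite (sum_horner_prim_rootX (prim_rootV prim_w)); last first.
  apply: leq_trans (size_polyMleq _ _) _; rewrite size_polyXn; lia.
by rewrite !coefXnM sub0n subKn // subn_gt0 [(d < _)%N]ltnNge leq_subr.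
Qed.

Lemma period_sum_qbinom2_qpoch k j :
  \sum_(b < d) (w ^+ b) ^+ k * qbinom w b j ^+ 2 * qpoch w j ^+ 2 =
  qpoch_scale w j ^+ 2 *
    \sum_(b < d) (w ^+ b) ^+ (k + j + j) * ((qpoch_poly w 1 j) ^+ 2).[w^-1 ^+ b].
Proof.
rewrite mulr_sumr; apply: eq_bigr => b _.
rewrite -mulrA -exprMn qbinom_qpoch_poly // horner_exp !exprD.
set A := w ^+ b; set B := (qpoch_poly w 1 j).[_]; ring.
Qed.

Lemma size_qpoch_poly2 j : (size ((qpoch_poly w 1 j) ^+ 2) <= j + j + 1)%N.
Proof.
rewrite expr2; apply: leq_trans (size_polyMleq _ _) _.
by have := size_qpoch_poly w 1 j; lia.
Qed.

Lemma coef_qpoch_poly2_01 j : ((qpoch_poly w 1 j) ^+ 2)`_0 = 1 /\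
  ((qpoch_poly w 1 j) ^+ 2)`_1 = - 2 * \sum_(i < j) w ^+ i.
Proof.
have [c0 c1] := coef_qpoch_poly01 w 1 j.
rewrite expr2 coef0M c0 mulr1; split => //.
rewrite coefM big_ord_recr big_ord1 /= c0 c1.
under [\sum_(i < j) _]eq_bigr do rewrite mulr1.
by ring.
Qed.

Lemma period_sum_qbinom2_eq0 k j : (0 < k)%N -> (k + j + j < d)%N ->
  \sum_(b < d) (w ^+ b) ^+ k * qbinom w b j ^+ 2 = 0.
Proof.
move=> k_gt0 lt_d; have size_p := size_qpoch_poly2 j.
have qpoch_neq0 : qpoch w j ^+ 2 != 0.
  by rewrite expf_neq0 // (qpoch_prim_root_neq0 prim_w); lia.
apply/eqP; rewrite -(mulIr_eq0 _ (mulIf qpoch_neq0)) mulr_suml.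
rewrite period_sum_qbinom2_qpoch sum_prim_rootX_hornerV; last 2 first.
- lia.
- by apply: leq_trans size_p _; lia.
rewrite lt_d add0r nth_default ?mulr0 //.
by apply: leq_trans size_p _; lia.
Qed.

Section OddOrder.

Variable j : nat.
Hypothesis d_eq : d = (j + j + 1)%N.

Lemma period_sum_qbinom2_odd :
  \sum_(b < d) w ^+ b * qbinom w b j ^+ 2 * qpoch w j ^+ 2 =
  qpoch_scale w j ^+ 2 * d%:R.
Proof.
have size_p := size_qpoch_poly2 j; have [coef0 _] := coef_qpoch_poly2_01 j.
under eq_bigr do rewrite -[w ^+ _]expr1.
rewrite period_sum_qbinom2_qpoch sum_prim_rootX_hornerV; last 2 first.
- lia.
- by apply: leq_trans size_p _; lia.
have -> : (1 + j + j < d)%N = false by apply/negbTE; lia.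
rewrite coef0 nth_default ?addr0 ?mulr1 //.
by apply: leq_trans size_p _; lia.
Qed.

Lemma period_sum2_qbinom2_odd : (1 < d)%N ->
  \sum_(b < d) (w ^+ b) ^+ 2 * qbinom w b j ^+ 2 * qpoch w j ^+ 2 =
  qpoch_scale w j ^+ 2 * (d%:R * (- 2 * \sum_(i < j) w ^+ i)).
Proof.
move=> d_gt1; have size_p := size_qpoch_poly2 j.
have [_ coef1] := coef_qpoch_poly2_01 j.
rewrite period_sum_qbinom2_qpoch.
have wrap b : (w ^+ b) ^+ (2 + j + j) = (w ^+ b) ^+ 1.
  rewrite (_ : 2 + j + j = 1 + d)%N; last by lia.
  by rewrite exprD [X in _ * X]exprAC (prim_expr_order prim_w) expr1n mulr1.
under eq_bigr do rewrite wrap.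
rewrite sum_prim_rootX_hornerV; last 2 first.
- lia.
- by apply: leq_trans size_p _; lia.
by rewrite ifT ?add0r ?coef1 //; lia.
Qed.

End OddOrder.

(* [b,j] (w;w)_j [b+1,j+1] (w;w)_(j+1) has the shape w^(b(2j+2)) p(w^-b) with
   p of degree 2j+1, so its period sum picks the vanishing coefficient p_(2j+2). *)
Lemma period_sum_qbinom_qbinomS_eq0 j : (j + j + 2 < d)%N ->
  \sum_(b < d) w ^+ b * (qbinom w b j * qbinom w b.+1 j.+1) = 0.
Proof.
move=> lt_d; set p := qpoch_poly w 1 j * qpoch_poly w w^-1 j.+1.
have size_p : (size p <= j + j + 2)%N.
  apply: leq_trans (size_polyMleq _ _) _.
  by have := size_qpoch_poly w 1 j; have := size_qpoch_poly w w^-1 j.+1; lia.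
have qpoch_neq0 : qpoch w j * qpoch w j.+1 != 0.
  by rewrite mulf_neq0 // (qpoch_prim_root_neq0 prim_w); lia.
apply/eqP; rewrite -(mulIr_eq0 _ (mulIf qpoch_neq0)) mulr_suml.
have term b : w ^+ b * (qbinom w b j * qbinom w b.+1 j.+1) * (qpoch w j * qpoch w j.+1)
    = qpoch_scale w j * qpoch_scale w j.+1 * w ^+ j.+1 *
      ((w ^+ b) ^+ (1 + j + j.+1) * p.[w^-1 ^+ b]).
  have Eb := qbinom_qpoch_poly b j w_neq0.
  have Eb1 := qbinom_qpoch_poly b.+1 j.+1 w_neq0.
  have shift : (qpoch_poly w 1 j.+1).[w^-1 ^+ b.+1] = (qpoch_poly w w^-1 j.+1).[w^-1 ^+ b].
    by rewrite !horner_qpoch_poly; apply: eq_bigr => i _; rewrite exprS mulr1 mulrA.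
  rewrite shift [w ^+ b.+1]exprS exprMn in Eb1.
  transitivity (w ^+ b * ((qbinom w b j * qpoch w j) * (qbinom w b.+1 j.+1 * qpoch w j.+1)));
    first by ring.
  rewrite Eb Eb1 hornerM !exprD expr1.
  set A := w ^+ b; set B := (qpoch_poly w 1 j).[_]; set C := (qpoch_poly w w^-1 j.+1).[_].
  by ring.
under eq_bigr do rewrite term.
rewrite -mulr_sumr sum_prim_rootX_hornerV; last 2 first.
- lia.
- by apply: leq_trans size_p _; lia.
rewrite ifT; last lia.
rewrite add0r nth_default ?mulr0 //.
by apply: leq_trans size_p _; lia.
Qed.

End PeriodSums.

Section CongruencesAtRoot.

Variables (d : nat) (z : algC).
Hypothesis prim_z : d.-primitive_root z.

Let d_gt0 : (0 < d)%N := prim_order_gt0 prim_z.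

Lemma prim_root_odd_identity h : d = (h + h + 1)%N -> (1 < d)%N ->
  (1 + z) ^+ 2 * (1 + 2 * (z ^+ 2 * \sum_(i < h) (z ^+ 2) ^+ i)) = 1 - z ^+ 2.
Proof.
move=> d_eq d_gt1.
have sum_even m : (1 + z) * \sum_(i < m) (z ^+ 2) ^+ i = \sum_(e < m + m) z ^+ e.
  elim: m => [|m IHm]; first by rewrite !big_ord0 mulr0.
  rewrite addSn addnS !big_ord_recr /= mulrDr IHm -exprM mul2n addnn exprS.
  by ring.
have sum_2h : \sum_(e < h + h) z ^+ e = - z ^+ (h + h).
  have := sum_prim_rootX prim_z 1; rewrite dvdn1 ifF; last by apply/negbTE; lia.
  rewrite d_eq addn1 big_ord_recr /=; under eq_bigr do rewrite expr1.
  by rewrite expr1 => /eqP; rewrite addr_eq0 => /eqP.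
have z_2h2 : z ^+ (h + h) * z ^+ 2 = z.
  rewrite -exprD (_ : h + h + 2 = 1 + d)%N; last by lia.
  by rewrite exprD (prim_expr_order prim_z) mulr1 expr1.
transitivity ((1 + z) * ((1 + z) + 2 * z ^+ 2 * ((1 + z) * \sum_(i < h) (z ^+ 2) ^+ i)));
  first by ring.
rewrite sum_even sum_2h.
transitivity ((1 + z) * ((1 + z) - 2 * (z ^+ (h + h) * z ^+ 2))); first by ring.
by rewrite z_2h2; ring.
Qed.

(* Multiplying by w - 1 turns [b+1]_w into w^(b+1) - 1; the two resulting
   period sums vanish unless d = 2j + 1, where both are computed. *)
Lemma period_sum_qint_qbinom2 j : (1 < d)%N -> odd d -> (j + j < d)%N ->
  (1 + z) ^+ 2 * \sum_(b < d) (z ^+ 2) ^+ b * qint (z ^+ 2) b.+1 * qbinom (z ^+ 2) b j ^+ 2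
  = \sum_(b < d) (z ^+ 2) ^+ b * qbinom (z ^+ 2) b j ^+ 2.
Proof.
move=> d_gt1 d_odd lt_2j_d.
have prim_w : d.-primitive_root (z ^+ 2) by rewrite prim_root_exp_coprime // coprime2n.
set w := z ^+ 2 in prim_w *.
have w_neq1 : w - 1 != 0.
  by rewrite subr_eq0 -[w in w == _]expr1 (prim_rootX_neq1 prim_w); lia.
apply: (mulfI w_neq1); rewrite mulrCA (sum_qint_subr1 w d (fun b => qbinom w b j ^+ 2)).
set U := \sum_(b < d) w ^+ b * qbinom w b j ^+ 2.
set W := \sum_(b < d) (w ^+ b) ^+ 2 * qbinom w b j ^+ 2.
have [lt_d | le_d] := ltnP (j + j + 1) d.
  have -> : U = 0.
    rewrite /U; under eq_bigr do rewrite -[w ^+ _]expr1.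
    by apply: (period_sum_qbinom2_eq0 prim_w) => //; lia.
  suff -> : W = 0 by rewrite mulr0 subrr !mulr0.
  apply: (period_sum_qbinom2_eq0 prim_w) => //.
  have : (j + j + 2 != d)%N.
    by apply: contraTneq d_odd => <-; rewrite addn2 /= addnn odd_double.
  by lia.
have d_eq : d = (j + j + 1)%N by lia.
have qpoch_neq0 : qpoch w j ^+ 2 != 0.
  by rewrite expf_neq0 // (qpoch_prim_root_neq0 prim_w); lia.
have HU := period_sum_qbinom2_odd prim_w d_eq; rewrite -mulr_suml -/U in HU.
have HW := period_sum2_qbinom2_odd prim_w d_eq d_gt1; rewrite -mulr_suml -/W in HW.
apply: (mulIf qpoch_neq0).
transitivity ((1 + z) ^+ 2 * (w * (W * qpoch w j ^+ 2) - U * qpoch w j ^+ 2)); first by ring.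
rewrite HW HU.
transitivity (- (qpoch_scale w j ^+ 2 * d%:R) *
   ((1 + z) ^+ 2 * (1 + 2 * (w * \sum_(i < j) w ^+ i)))); first by ring.
by rewrite -mulrA HU (prim_root_odd_identity d_eq d_gt1) /w; ring.
Qed.

Variable n : nat.
Hypothesis dvd_dn : (d %| n)%N.

Lemma sum_prim_rootX_qbinom2_even i : ~~ odd d ->
  \sum_(k < n) z ^+ k * (qbinom z k i ^+ 2 * qbinom z i.*2 i) = 0.
Proof.
move=> d_even.
have [le_d | lt_d] := leqP d (i %% d).*2.
  by rewrite big1 // => k _; rewrite (qbinom_double_eq0 prim_z le_d) !mulr0.
under eq_bigr do rewrite mulrA.
rewrite -mulr_suml -(divnK dvd_dn).
rewrite (sum_ord_blocks _ (g := fun k => z ^+ k * qbinom z k i ^+ 2)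
  (c := fun a => 'C(a, i %/ d)%:R ^+ 2)
  (h := fun b => (z ^+ b) ^+ 1 * qbinom z b (i %% d) ^+ 2)).
  rewrite (period_sum_qbinom2_eq0 prim_z) ?mulr0 ?mul0r //.
  have : (i %% d).*2.+1 != d by apply: contraNneq d_even => <-; rewrite /= odd_double.
  by lia.
move=> a b ltbd /=; rewrite expr1 (prim_rootXMD prim_z) {1}(divn_eq i d).
by rewrite qbinom_lucasMD ?ltn_pmod //; ring.
Qed.

Lemma sum_qint_qbinom2_odd i : (1 < d)%N -> odd d ->
  (1 + z) ^+ 2 * \sum_(k < n) (z ^+ 2) ^+ k * qint (z ^+ 2) k.+1 *
                   (qbinom (z ^+ 2) k i ^+ 2 * qbinom (z ^+ 2) i.*2 i)
  = \sum_(k < n) (z ^+ 2) ^+ k * (qbinom (z ^+ 2) k i ^+ 2 * qbinom (z ^+ 2) i.*2 i).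
Proof.
move=> d_gt1 d_odd.
have prim_w : d.-primitive_root (z ^+ 2) by rewrite prim_root_exp_coprime // coprime2n.
have [le_d | lt_d] := leqP d (i %% d).*2.
  by rewrite !big1 ?mulr0 // => k _; rewrite (qbinom_double_eq0 prim_w le_d) !mulr0.
under eq_bigr do rewrite mulrA.
under [in RHS]eq_bigr do rewrite mulrA.
rewrite -!mulr_suml -(divnK dvd_dn).
have lucas a b : (b < d)%N ->
    qbinom (z ^+ 2) (a * d + b) i = 'C(a, i %/ d)%:R * qbinom (z ^+ 2) b (i %% d).
  by move=> ltbd; rewrite {1}(divn_eq i d) (qbinom_lucasMD prim_w) ?ltn_pmod.
rewrite (sum_ord_blocks _
  (g := fun k => (z ^+ 2) ^+ k * qint (z ^+ 2) k.+1 * qbinom (z ^+ 2) k i ^+ 2)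
  (c := fun a => 'C(a, i %/ d)%:R ^+ 2)
  (h := fun b => (z ^+ 2) ^+ b * qint (z ^+ 2) b.+1 * qbinom (z ^+ 2) b (i %% d) ^+ 2));
  last first.
  move=> a b ltbd /=; rewrite (prim_rootXMD prim_w) -addnS (qint_prim_rootMD prim_w) //.
  by rewrite lucas //; ring.
rewrite (sum_ord_blocks _ (g := fun k => (z ^+ 2) ^+ k * qbinom (z ^+ 2) k i ^+ 2)
  (c := fun a => 'C(a, i %/ d)%:R ^+ 2)
  (h := fun b => (z ^+ 2) ^+ b * qbinom (z ^+ 2) b (i %% d) ^+ 2)); last first.
  by move=> a b ltbd /=; rewrite (prim_rootXMD prim_w) lucas //; ring.
rewrite -(period_sum_qint_qbinom2 d_gt1 d_odd); first by ring.
by have := ltn_pmod i d_gt0; lia.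
Qed.

Lemma sum_prim_rootX_qbinom_qbinomS_even i : (2 < d)%N -> ~~ odd d -> (i < n)%N ->
  qint (z ^+ 2) i.+1 * qbinom z i.*2 i *
    \sum_(i <= k < n) z ^+ k * qbinom z k i * qbinom z k.+1 i.+1 = 0.
Proof.
move=> d_gt2 d_even lt_in; have lt_id := ltn_pmod i d_gt0.
set F := fun k => z ^+ k * qbinom z k i * qbinom z k.+1 i.+1.
have -> : \sum_(i <= k < n) F k = \sum_(k < n) F k.
  rewrite -(big_mkord xpredT F) (big_cat_nat (leq0n i) (ltnW lt_in)) /=.
  rewrite [X in _ = X + _]big_nat_cond [X in _ = X + _]big1 ?add0r //.
  by move=> k /andP [/andP [_ ltki] _]; rewrite /F qbinom_small // mulr0 mul0r.
have [le_d | lt_d] := leqP d (i %% d).*2.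
  by rewrite (qbinom_double_eq0 prim_z le_d) mulr0 mul0r.
have [d_eq | d_neq] := eqVneq (i %% d).*2.+2 d.
  have z2_neq1 : z ^+ 2 - 1 != 0 by rewrite subr_eq0 (prim_rootX_neq1 prim_z); lia.
  suff -> : qint (z ^+ 2) i.+1 = 0 by rewrite !mul0r.
  apply: (mulfI z2_neq1); rewrite mulr0 /qint -subrX1 -exprM.
  have -> : (2 * i.+1)%N = ((i %/ d).*2.+1 * d)%N by have := divn_eq i d; nia.
  by rewrite mulnC exprM (prim_expr_order prim_z) expr1n subrr.
have lt_d2 : (i %% d + i %% d + 2 < d)%N.
  have : (i %% d).*2.+1 != d by apply: contraNneq d_even => <-; rewrite /= odd_double.
  by move: d_neq lt_d; lia.
rewrite -(divnK dvd_dn) (sum_ord_blocks _ (g := F) (c := fun a => 'C(a, i %/ d)%:R ^+ 2)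
  (h := fun b => z ^+ b * (qbinom z b (i %% d) * qbinom z b.+1 (i %% d).+1))).
  by rewrite (period_sum_qbinom_qbinomS_eq0 prim_z lt_d2) !mulr0.
move=> a b ltbd; rewrite /F (prim_rootXMD prim_z) {1 2}(divn_eq i d).
by rewrite qbinom_lucasMD ?qbinom_lucasMDS //; [ring | lia].
Qed.

End CongruencesAtRoot.

Lemma coef_gSun (p : {poly int}) k i :
  (gSun p k)`_i = qbinom p k i ^+ 2 * qbinom p i.*2 i.
Proof.
have -> : gSun p k = \poly_(j < k.+1) (qbinom p k j ^+ 2 * qbinom p j.*2 j).
  by rewrite poly_def; apply: eq_bigr => j _; rewrite mul_polyC.
rewrite coef_poly.
by case: ltnP => // ltki; rewrite qbinom_small ?expr0n ?mul0r.
Qed.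

Lemma coef_sum_Xn_polyC (R : comNzRingType) n (c : nat -> R) i :
  (\sum_(j < n) 'X ^+ j * (c j)%:P)`_i = if (i < n)%N then c i else 0.
Proof.
have -> : \sum_(j < n) 'X ^+ j * (c j)%:P = \poly_(j < n) c j.
  by rewrite poly_def; apply: eq_bigr => j _; rewrite mulrC mul_polyC.
exact: coef_poly.
Qed.

Section Congruences.

Variable n : nat.
Hypothesis n_gt0 : (0 < n)%N.

Local Notation q := ('X : {poly int}).

Lemma gSun_qint_congr :
  pcongr (\prod_(d <- divisors n | (1 < d)%N && odd d) 'Phi_d)
    (((1 + q) ^+ 2)%:P *
       \sum_(k < n) ((q ^+ 2) ^+ k * qint (q ^+ 2) k.+1)%:P * gSun (q ^+ 2) k)
    (\sum_(k < n) ((q ^+ 2) ^+ k)%:P * gSun (q ^+ 2) k).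
Proof.
move=> i; apply: prod_Cyclotomic_dvd_int => // d z dvd_dn /andP [d_gt1 d_odd] prim_z.
rewrite coefCM !coef_sum rmorphB rmorphM !rmorph_sum rmorphXn rmorphD rmorph1 evalCX.
under eq_bigr do rewrite coefCM coef_gSun !rmorphM rmorph_qint !rmorph_qbinom
  !rmorphXn !evalCX -expr2.
under [X in _ - X]eq_bigr do rewrite coefCM coef_gSun !rmorphM !rmorph_qbinom
  !rmorphXn !evalCX -expr2.
by apply/eqP; rewrite subr_eq0 (sum_qint_qbinom2_odd prim_z dvd_dn).
Qed.

Lemma gSun_sum_congr :
  pcongr (\prod_(d <- divisors n | ~~ odd d) 'Phi_d)
    (\sum_(k < n) (q ^+ k)%:P * gSun q k) 0.
Proof.
move=> i; apply: prod_Cyclotomic_dvd_int => // d z dvd_dn d_even prim_z.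
rewrite coef0 subr0 coef_sum rmorph_sum.
under eq_bigr do rewrite coefCM coef_gSun !rmorphM !rmorph_qbinom !rmorphXn !evalCX -expr2.
exact: (sum_prim_rootX_qbinom2_even prim_z dvd_dn).
Qed.

Lemma qbinom_double_sum_congr :
  pcongr (\prod_(d <- divisors n | (2 < d)%N && ~~ odd d) 'Phi_d)
    (\sum_(j < n) 'X ^+ j *
       (qint (q ^+ 2) j.+1 * qbinom q j.*2 j *
        \sum_(j <= k < n) q ^+ k * qbinom q k j * qbinom q k.+1 j.+1)%:P)
    0.
Proof.
move=> i; rewrite coef0 subr0 (coef_sum_Xn_polyC n (fun j => qint (q ^+ 2) j.+1 *
  qbinom q j.*2 j * \sum_(j <= k < n) q ^+ k * qbinom q k j * qbinom q k.+1 j.+1)).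
case: ltnP => lt_in; last by exists 0; rewrite mul0r.
apply: prod_Cyclotomic_dvd_int => // d z dvd_dn /andP [d_gt2 d_even] prim_z.
rewrite !rmorphM rmorph_qint rmorph_qbinom rmorph_sum !rmorphXn !evalCX.
under eq_bigr do rewrite !rmorphM !rmorph_qbinom !rmorphXn !evalCX.
exact: (sum_prim_rootX_qbinom_qbinomS_even prim_z dvd_dn).
Qed.

End Congruences.

Theorem theorem5 (n : nat) : (0 < n)%N ->
  let q : {poly int} := 'X in
  let x : {poly {poly int}} := 'X in
  [/\
   pcongr (\prod_(d <- divisors n | (1 < d)%N && odd d) 'Phi_d)
     (((1 + q) ^+ 2)%:P *
        \sum_(k < n) ((q ^+ 2) ^+ k * qint (q ^+ 2) k.+1)%:P * gSun (q ^+ 2) k)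
     (\sum_(k < n) ((q ^+ 2) ^+ k)%:P * gSun (q ^+ 2) k),
   pcongr (\prod_(d <- divisors n | ~~ odd d) 'Phi_d)
     (\sum_(k < n) (q ^+ k)%:P * gSun q k) 0
 & pcongr (\prod_(d <- divisors n | (2 < d)%N && ~~ odd d) 'Phi_d)
     (\sum_(j < n) x ^+ j *
        (qint (q ^+ 2) j.+1 * qbinom q j.*2 j *
         \sum_(j <= k < n) q ^+ k * qbinom q k j * qbinom q k.+1 j.+1)%:P)
     0].
Proof.
move=> n_gt0 q x; split.
- exact: gSun_qint_congr.
- exact: gSun_sum_congr.
- exact: qbinom_double_sum_congr.
Qed.
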